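(* Let $G$ be a $2$-Engel group, i.e. $[x,y,y]=1$ for all $x,y\in G$. If the set $\{x\in G:x^3=1\}$ is $2$-large in $G$, then $G$ has exponent $3$.
   Context: $[x,y]=x^{-1}y^{-1}xy$ and $[x,y,z]=[[x,y],z]$. A subset $X\subseteq G$ is $2$-large in $G$ if $aX\cap bX\ne\emptyset$ for all $a,b\in G$. *)

Definition is_group {G : Type} (mul : G -> G -> G) (inv : G -> G) (one : G) : Prop :=
  (forall x y z, mul x (mul y z) = mul (mul x y) z) /\
  (forall x, mul one x = x) /\
  (forall x, mul x one = x) /\
  (forall x, mul (inv x) x = one) /\
  (forall x, mul x (inv x) = one).

Definition comm {G : Type} (mul : G -> G -> G) (inv : G -> G) (x y : G) : G :=
  mul (mul (mul (inv x) (inv y)) x) y.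

Definition comm3 {G : Type} (mul : G -> G -> G) (inv : G -> G) (x y z : G) : G :=
  comm mul inv (comm mul inv x y) z.

Definition two_engel {G : Type} (mul : G -> G -> G) (inv : G -> G) (one : G) : Prop :=
  forall x y, comm3 mul inv x y y = one.

Definition two_large {G : Type} (mul : G -> G -> G) (X : G -> Prop) : Prop :=
  forall a b, exists x y, X x /\ X y /\ mul a x = mul b y.

Definition cube {G : Type} (mul : G -> G -> G) (x : G) : G := mul (mul x x) x.

From Corelib Require Import ssreflect.

(* Applying 2-largeness to g and 1 writes g = y x^-1 with x^3 = y^3 = 1.  In a
   2-Engel group the commutator c = [y,x] commutes with both x and y, so
   (xy)^3 = x^3 y^3 c^3; conjugating y^3 by x moreover gives c^3 = [y^3,x].
   Hence the elements of cube 1 are closed under products and inverses, and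
   g^3 = 1. *)

Declare Scope group_scope.
Local Open Scope group_scope.

Section GroupLaws.

Context {G : Type} {mul : G -> G -> G} {inv : G -> G} {one : G}.
Hypothesis Hgrp : is_group mul inv one.

Local Infix "*" := mul : group_scope.
Local Notation "x ^-1" := (inv x) (at level 3, left associativity, format "x ^-1") : group_scope.
Local Notation "[~ x , y ]" := (comm mul inv x y) : group_scope.

Lemma mulgA x y z : x * (y * z) = x * y * z.
Proof. by case: Hgrp. Qed.

Lemma mul1g x : one * x = x.
Proof. by case: Hgrp => _ []. Qed.

Lemma mulg1 x : x * one = x.
Proof. by case: Hgrp => _ [_ []]. Qed.

Lemma mulVg x : x^-1 * x = one.
Proof. by case: Hgrp => _ [_ [_ []]]. Qed.

Lemma mulgV x : x * x^-1 = one.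
Proof. by case: Hgrp => _ [_ [_ [_]]]. Qed.

Lemma mulgK x y : y * x * x^-1 = y.
Proof. by rewrite -mulgA mulgV mulg1. Qed.

Lemma mulKg x y : x^-1 * (x * y) = y.
Proof. by rewrite mulgA mulVg mul1g. Qed.

Lemma invg_unique x y : x * y = one -> y = x^-1.
Proof. by move=> xy1; rewrite -[y](mulKg x) xy1 mulg1. Qed.

Lemma invgK x : x^-1^-1 = x.
Proof. by symmetry; apply: invg_unique; rewrite mulVg. Qed.

Lemma invg1 : one^-1 = one.
Proof. by symmetry; apply: invg_unique; rewrite mul1g. Qed.

Lemma invMg x y : (x * y)^-1 = y^-1 * x^-1.
Proof. by symmetry; apply: invg_unique; rewrite !mulgA mulgK mulgV. Qed.

Local Ltac gsimpl := repeat progress rewrite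
  ?invMg ?invgK ?invg1 ?mulgA ?mulgK ?mulVg ?mulgV ?mul1g ?mulg1.

Lemma commute_of_comm1 x y : [~ x, y] = one -> x * y = y * x.
Proof. by move=> xy1; rewrite -[y * x]mulg1 -xy1 /comm; gsimpl. Qed.

Lemma invg_comm x y : [~ x, y]^-1 = [~ y, x].
Proof. by rewrite /comm; gsimpl. Qed.

Lemma commuteVl x y : x * y = y * x -> x^-1 * y = y * x^-1.
Proof. by move=> xy; rewrite -[x^-1 * y](mulgK x) -(mulgA _ y x) -xy; gsimpl. Qed.

Lemma commgEl x y : [~ x, y] = x^-1 * (y^-1 * x * y).
Proof. by rewrite /comm; gsimpl. Qed.

Lemma conjg_mulR x y : y^-1 * x * y = x * [~ x, y].
Proof. by rewrite /comm; gsimpl. Qed.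

Lemma comm1g x : [~ one, x] = one.
Proof. by rewrite /comm; gsimpl. Qed.

Lemma cube_inv x : cube mul x^-1 = (cube mul x)^-1.
Proof. by rewrite /cube; gsimpl. Qed.

Lemma conj_cube x y : y^-1 * cube mul x * y = cube mul (y^-1 * x * y).
Proof. by rewrite /cube; gsimpl. Qed.

Lemma cube1g : cube mul one = one.
Proof. by rewrite /cube !mulg1. Qed.

Lemma cube_mul_central x y c :
  y * x = x * y * c -> c * x = x * c -> c * y = y * c ->
  cube mul (x * y) = cube mul x * cube mul y * cube mul c.
Proof.
move=> yx cx cy.
(* With an arbitrary left factor z, these rules sort any left-associated word
   into x..x y..y c..c. *)
have yx' z : z * y * x = z * x * y * c by rewrite -mulgA yx !mulgA.
have cx' z : z * c * x = z * x * c by rewrite -mulgA cx mulgA.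
have cy' z : z * c * y = z * y * c by rewrite -mulgA cy mulgA.
by rewrite /cube; gsimpl; repeat rewrite ?yx' ?cx' ?cy'.
Qed.

Section TwoEngel.

Hypothesis Hengel : two_engel mul inv one.

Lemma engel_comm_commute_r x y : [~ y, x] * x = x * [~ y, x].
Proof. exact: commute_of_comm1 (Hengel y x). Qed.

Lemma engel_comm_commute_l x y : [~ y, x] * y = y * [~ y, x].
Proof. by rewrite -invg_comm; apply/commuteVl/commute_of_comm1/Hengel. Qed.

Lemma engel_cube_mul x y :
  cube mul (x * y) = cube mul x * cube mul y * cube mul [~ y, x].
Proof.
apply: cube_mul_central.
- by rewrite /comm; gsimpl.
- exact: engel_comm_commute_r.
- exact: engel_comm_commute_l.
Qed.

Lemma engel_cube_comm x y : cube mul [~ y, x] = [~ cube mul y, x].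
Proof.
have cube_yc : cube mul (y * [~ y, x]) = cube mul y * cube mul [~ y, x].
{ rewrite (cube_mul_central _ _ one) ?cube1g ?mulg1 ?mul1g //.
  exact: engel_comm_commute_l. }
by rewrite (commgEl (cube mul y)) conj_cube conjg_mulR cube_yc mulKg.
Qed.

Lemma engel_cube1_mul x y :
  cube mul x = one -> cube mul y = one -> cube mul (x * y) = one.
Proof.
by move=> x3 y3; rewrite engel_cube_mul engel_cube_comm x3 y3 comm1g !mulg1.
Qed.

End TwoEngel.

End GroupLaws.

Theorem theorem4p4 (G : Type) (mul : G -> G -> G) (inv : G -> G) (one : G)
  (Hgrp : is_group mul inv one)
  (Hengel : two_engel mul inv one)
  (Hlarge : two_large mul (fun x => cube mul x = one)) :
  forall x : G, cube mul x = one.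
Proof.
move=> g; case: (Hlarge g one) => x [y [x3 [y3 gx_y]]].
have -> : g = mul y (inv x) by rewrite -[g](mulgK Hgrp x) gx_y (mul1g Hgrp).
apply: (engel_cube1_mul Hgrp Hengel _ _ y3).
by rewrite (cube_inv Hgrp) x3 (invg1 Hgrp).
Qed.
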